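(* We have \begin{align*} \sum_{k=1}^\infty\frac{5k-2}{k(2k-1)2^k\binom{3k}k}&=\frac{\pi}6,\\ \sum_{k=1}^\infty\frac{(7k-3)8^k}{k(2k-1)3^k\binom{3k}k}&=\frac{8\sqrt3}9\pi,\\ \sum_{k=1}^\infty\frac{28k-11}{k(2k-1)(-4)^k\binom{3k}k}&=-2\log2,\\ \sum_{k=1}^\infty\frac{7k-2}{k(2k-1)(-3)^k\binom{4k}{2k}}&=-\frac{\log3}4,\\ \sum_{k=1}^\infty\frac{10k-3}{k(2k-1)\binom{4k}{2k}}&=\frac{2\sqrt3}9\pi,\\ \sum_{k=1}^\infty\frac{(3k-1)4^k}{k(2k-1)\binom{4k}{2k}}&=\frac{\pi}2,\\ \sum_{k=1}^\infty\frac{(6k-1)(-2)^{k-1}}{k(2k-1)\binom{4k}{2k}}&=\frac{\pi}4,\\ \sum_{k=1}^\infty\frac{14k-3}{k(2k-1)4^k\binom{4k}{2k}}&=\frac23\log2,\\ \sum_{k=1}^\infty\frac{(12k^2+1)4^k}{\binom{4k}{2k}}&=\frac{11}2\pi+\frac{50}3,\\ \sum_{k=1}^\infty\frac{k(126k+29)(-2)^k}{\binom{4k}{2k}}&=-2\pi-\frac{65}3,\\ \sum_{k=1}^\infty\frac{k(70k-37)}{4^k\binom{4k}{2k}}&=\frac8{729}(46\log2+111). \end{align*}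
   Context: $\log$ is the natural logarithm. *)

From Stdlib Require Import Reals.
From Coquelicot Require Import Coquelicot.
Open Scope R_scope.

Definition sum_from_1 (a : nat -> R) (l : R) : Prop :=
  is_series (fun n => a (S n)) l.

Definition binom (n m : nat) : R := Binomial.C n m.

(* Each of the first eight series has the form
     sum_(k>=1) c^(k-1) (A k - B) / (k (2k-1) C_k),   C_k = binom(3k, k) or binom(4k, 2k).
   By Euler's integral  int_0^1 t^a (1-t)^b dt = a! b! / (a+b+1)!,  its k-th term is the moment
   int_0^1 p r^(k-1) of an affine function p of t, resp. of t(1-t), against r = c t (1-t)^2,
   resp. r = c t^2 (1-t)^2.  Since |r| < 1 on [0,1], summing the geometric series under the
   integral gives  int_0^1 p / (1 - r),  which for the given c, A, B is an elementary arctangent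
   or logarithm integral.  The last three series differ from multiples of the sixth, seventh and
   eighth by telescoping terms H(k) - H(k-1), where H(m) = P(m) s^m / binom(4m, 2m) with P
   quadratic; H(m) -> 0 because binom(4m, 2m) grows like 16^m. *)

From Stdlib Require Import Reals Lra Lia Factorial.
From Coquelicot Require Import Coquelicot.
Open Scope R_scope.

Lemma is_RInt_antiderivative (f F : R -> R) (a b v : R) : a <= b ->
  (forall t, a <= t <= b -> is_derive F t (f t)) ->
  (forall t, a <= t <= b -> ex_derive f t) ->
  F b - F a = v -> is_RInt f a b v.
Proof.
  intros Hab HF Hf <-.
  apply (is_RInt_derive F f); rewrite Rmin_left, Rmax_right by lra; [assumption|].
  intros t Ht. apply (ex_derive_continuous (V := R_NormedModule) f), Hf, Ht.
Qed.

Lemma is_RInt_congr (f g : R -> R) (a b l l' : R) :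
  (forall t, f t = g t) -> l = l' -> is_RInt f a b l -> is_RInt g a b l'.
Proof. intros Hfg <-. apply is_RInt_ext. intros t _. apply Hfg. Qed.

Lemma is_lim_seq_geom_bound (u : nat -> R) (l K q : R) : Rabs q < 1 ->
  (forall n, Rabs (u n - l) <= K * q ^ n) -> is_lim_seq u l.
Proof.
  intros Hq Hu.
  assert (HKq : is_lim_seq (fun n => K * q ^ n) 0).
  { replace (Finite 0) with (Rbar_mult K 0) by (simpl; f_equal; ring).
    apply is_lim_seq_scal_l, is_lim_seq_geom, Hq. }
  apply is_lim_seq_le_le with (u := fun n => l - K * q ^ n) (w := fun n => l + K * q ^ n).
  - intro n. specialize (Hu n). apply Rabs_le_between in Hu. lra.
  - replace (Finite l) with (Rbar_minus l 0) by (simpl; f_equal; ring).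
    apply is_lim_seq_minus'; [apply is_lim_seq_const | exact HKq].
  - replace (Finite l) with (Rbar_plus l 0) by (simpl; f_equal; ring).
    apply is_lim_seq_plus'; [apply is_lim_seq_const | exact HKq].
Qed.

Lemma sum_n_pow (x : R) (n : nat) : x <> 1 ->
  sum_n (fun m => x ^ m) n = (1 - x ^ S n) / (1 - x).
Proof.
  intro Hx. induction n as [|n IH].
  - rewrite sum_O. simpl. field. lra.
  - rewrite sum_Sn, IH. unfold plus; simpl. field. lra.
Qed.

Lemma Rabs_geom_remainder_le (x r M rho : R) (n : nat) :
  rho < 1 -> Rabs r <= rho -> Rabs x <= M ->
  Rabs (x * r ^ n / (1 - r)) <= M * rho ^ n / (1 - rho).
Proof.
  intros Hrho Hr Hx.
  assert (Hpow : Rabs r ^ n <= rho ^ n) by (apply pow_incr; split; [apply Rabs_pos | lra]).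
  assert (0 <= Rabs r ^ n) by (apply pow_le, Rabs_pos).
  pose proof (Rabs_pos x).
  apply Rabs_le_between in Hr.
  assert (Hden : / (1 - r) <= / (1 - rho)) by (apply Rinv_le_contravar; lra).
  assert (0 < / (1 - r)) by (apply Rinv_0_lt_compat; lra).
  unfold Rdiv. rewrite !Rabs_mult, Rabs_inv, <- RPow_abs, (Rabs_right (1 - r)) by lra.
  apply Rmult_le_compat; [apply Rmult_le_pos | | apply Rmult_le_compat |]; lra.
Qed.

Lemma is_series_RInt_geom (p r : R -> R) (a : nat -> R) (I rho M : R) :
  rho < 1 ->
  (forall t, 0 <= t <= 1 -> Rabs (r t) <= rho) ->
  (forall t, 0 <= t <= 1 -> Rabs (p t) <= M) ->
  (forall m, is_RInt (fun t => p t * r t ^ m) 0 1 (a m)) ->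
  is_RInt (fun t => p t / (1 - r t)) 0 1 I ->
  is_series a I.
Proof.
  intros Hrho Hr Hp Ha HI.
  assert (Hrho0 : 0 <= rho) by (eapply Rle_trans; [apply Rabs_pos | apply (Hr 0); lra]).
  assert (Hpartial : forall n,
    is_RInt (fun t => p t * sum_n (fun m => r t ^ m) n) 0 1 (sum_n a n)).
  { induction n as [|n IH].
    - rewrite sum_O. eapply is_RInt_ext; [|apply (Ha 0%nat)].
      intros t _. rewrite sum_O. reflexivity.
    - rewrite sum_Sn. eapply is_RInt_ext; [|apply (is_RInt_plus _ _ _ _ _ _ IH (Ha (S n)))].
      intros t _. rewrite sum_Sn. unfold plus; simpl. ring. }
  assert (Htail : forall n, Rabs (sum_n a n - I) <= M * rho / (1 - rho) * rho ^ n).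
  { intro n.
    assert (Hrem : is_RInt (fun t => p t * r t ^ S n / (1 - r t)) 0 1 (minus I (sum_n a n))).
    { eapply is_RInt_ext; [|apply (is_RInt_minus _ _ _ _ _ _ HI (Hpartial n))].
      intros t Ht. rewrite Rmin_left, Rmax_right in Ht by lra.
      assert (Hrt := Hr t ltac:(lra)). apply Rabs_le_between in Hrt.
      unfold minus, plus, opp; simpl. rewrite sum_n_pow by lra. simpl. field. lra. }
    rewrite Rabs_minus_sym.
    replace (M * rho / (1 - rho) * rho ^ n) with ((1 - 0) * (M * rho ^ S n / (1 - rho)))
      by (rewrite Rminus_0_r, <- (tech_pow_Rmult rho n); field; lra).
    assert (Hbound : forall t, 0 <= t <= 1 ->
      Rabs (p t * r t ^ S n / (1 - r t)) <= M * rho ^ S n / (1 - rho))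
      by (intros t Ht; apply Rabs_geom_remainder_le; auto).
    exact (norm_RInt_le_const (V := R_NormedModule) _ 0 1 _ _ ltac:(lra) Hbound Hrem). }
  unfold is_series. apply is_lim_seq_geom_bound with (K := M * rho / (1 - rho)) (q := rho).
  - rewrite Rabs_right; lra.
  - exact Htail.
Qed.

Lemma sum_from_1_ext (a b : nat -> R) (l : R) :
  (forall m, a (S m) = b (S m)) -> sum_from_1 a l -> sum_from_1 b l.
Proof. intro Hab. apply is_series_ext, Hab. Qed.

Lemma sum_from_1_telescoping (a b H : nat -> R) (c l : R) :
  sum_from_1 b l ->
  (forall m, a (S m) = c * b (S m) + (H (S m) - H m)) ->
  is_lim_seq H 0 ->
  sum_from_1 a (c * l - H 0%nat).
Proof.
  intros Hb Hab HH.
  assert (Hpartial : forall n,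
    sum_n (fun m => a (S m)) n = c * sum_n (fun m => b (S m)) n + (H (S n) - H 0%nat)).
  { induction n as [|n IH].
    - rewrite !sum_O. apply Hab.
    - rewrite !sum_Sn, IH, Hab. unfold plus; simpl. ring. }
  change (is_lim_seq (sum_n (fun m => a (S m))) (c * l - H 0%nat)).
  apply (is_lim_seq_ext (fun n => c * sum_n (fun m => b (S m)) n + (H (S n) - H 0%nat))).
  { intro n. symmetry. apply Hpartial. }
  replace (c * l - H 0%nat) with (c * l + (0 - H 0%nat)) by ring.
  apply is_lim_seq_plus'; [apply is_lim_seq_mult'; [apply is_lim_seq_const | exact Hb]|].
  apply is_lim_seq_minus'; [apply (is_lim_seq_incr_1 H), HH | apply is_lim_seq_const].
Qed.

Definition beta_nat (a b : nat) : R :=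
  INR (fact a) * INR (fact b) / INR (fact (a + b + 1)).

Lemma INR_fact_S (n : nat) : INR (fact (S n)) = (INR n + 1) * INR (fact n).
Proof. rewrite <- S_INR, <- mult_INR. reflexivity. Qed.

Lemma is_RInt_beta_nat (b a : nat) :
  is_RInt (fun t => t ^ a * (1 - t) ^ b) 0 1 (beta_nat a b).
Proof.
  revert a; induction b as [|b IH]; intro a; pose proof (pos_INR a) as Ha.
  - apply is_RInt_antiderivative with (F := fun t => t ^ S a / (INR a + 1)).
    + lra.
    + intros t _. auto_derive; [lra|].
      (* auto_derive leaves [INR (S a)] unfolded to a match *)
      change (match a with 0%nat => 1 | S _ => INR a + 1 end) with (INR (S a)).
      rewrite S_INR. field. lra.
    + intros t _. auto_derive. auto.
    + unfold beta_nat. rewrite Nat.add_0_r, Nat.add_1_r, INR_fact_S, pow1, pow_i by lia.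
      simpl. field. split; [apply INR_fact_neq_0 | lra].
  - (* integration by parts: beta_nat a (S b) = (b + 1) / (a + 1) * beta_nat (S a) b *)
    set (c := (INR b + 1) / (INR a + 1)).
    assert (Hparts : is_RInt (fun t => t ^ a * (1 - t) ^ S b - c * (t ^ S a * (1 - t) ^ b)) 0 1 0).
    { apply is_RInt_antiderivative with (F := fun t => t ^ S a * (1 - t) ^ S b / (INR a + 1)).
      + lra.
      + intros t _. auto_derive; [lra|].
        change (match a with 0%nat => 1 | S _ => INR a + 1 end) with (INR (S a)).
        change (match b with 0%nat => 1 | S _ => INR b + 1 end) with (INR (S b)).
        unfold c. rewrite !S_INR. simpl. replace (1 + - t) with (1 - t) by ring. field. lra.
      + intros t _. auto_derive. auto.
      + rewrite pow_i, Rminus_diag, pow_i by lia. field. lra. }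
    assert (H := is_RInt_plus _ _ _ _ _ _ Hparts (is_RInt_scal _ _ _ c _ (IH (S a)))).
    revert H. apply is_RInt_congr; unfold plus, scal, mult; cbn -[pow fact INR beta_nat].
    + intro t. ring.
    + unfold c, beta_nat.
      replace (S a + b + 1)%nat with (S (a + b + 1)) by lia.
      replace (a + S b + 1)%nat with (S (a + b + 1)) by lia.
      pose proof (pos_INR b); pose proof (pos_INR (a + b + 1)).
      rewrite !INR_fact_S. field. repeat split; try apply INR_fact_neq_0; lra.
Qed.

Lemma binom_pos (n k : nat) : 0 < binom n k.
Proof.
  unfold binom, Binomial.C. apply Rdiv_lt_0_compat;
    [|apply Rmult_lt_0_compat]; apply INR_fact_lt_0.
Qed.

Ltac fact_field m :=
  rewrite !INR_fact_S, ?S_INR, ?plus_INR, ?mult_INR; simpl (INR 1); simpl (INR 2); simpl (INR 3);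
  pose proof (pos_INR m); field; repeat split; try apply INR_fact_neq_0; lra.

Lemma beta_nat_central (m : nat) :
  beta_nat (2 * m) (2 * m) = / ((4 * INR m + 1) * binom (4 * m) (2 * m)).
Proof.
  unfold beta_nat, binom, Binomial.C.
  replace (4 * m - 2 * m)%nat with (2 * m)%nat by lia.
  replace (4 * m)%nat with (2 * m + 2 * m)%nat by lia.
  replace (2 * m + 2 * m + 1)%nat with (S (2 * m + 2 * m)) by lia.
  fact_field m.
Qed.

Lemma binom_4k_succ (m : nat) :
  binom (4 * S m) (2 * S m) =
  2 * (4 * INR m + 3) * (4 * INR m + 1) / ((INR m + 1) * (2 * INR m + 1)) * binom (4 * m) (2 * m).
Proof.
  unfold binom, Binomial.C.
  replace (4 * S m - 2 * S m)%nat with (S (S (2 * m))) by lia.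
  replace (4 * m - 2 * m)%nat with (2 * m)%nat by lia.
  replace (2 * S m)%nat with (S (S (2 * m))) by lia.
  replace (4 * S m)%nat with (S (S (S (S (2 * m + 2 * m))))) by lia.
  replace (4 * m)%nat with (2 * m + 2 * m)%nat by lia.
  fact_field m.
Qed.

Lemma beta_nat_m_2m (m : nat) :
  beta_nat m (2 * m) =
  3 * (3 * INR m + 2) / (2 * (INR m + 1) * (2 * INR m + 1) * binom (3 * S m) (S m)).
Proof.
  unfold beta_nat, binom, Binomial.C.
  replace (3 * S m - S m)%nat with (S (S (2 * m))) by lia.
  replace (3 * S m)%nat with (S (S (m + 2 * m + 1))) by lia.
  fact_field m.
Qed.

Lemma beta_nat_Sm_2m (m : nat) :
  beta_nat (S m) (2 * m) = 3 / (2 * (2 * INR m + 1) * binom (3 * S m) (S m)).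
Proof.
  unfold beta_nat, binom, Binomial.C.
  replace (3 * S m - S m)%nat with (S (S (2 * m))) by lia.
  replace (3 * S m)%nat with (S (S m + 2 * m + 1)) by lia.
  replace (S m + 2 * m + 1)%nat with (S (m + 2 * m + 1)) by lia.
  fact_field m.
Qed.

Lemma beta_nat_S2m_S2m (m : nat) :
  beta_nat (S (2 * m)) (S (2 * m)) = 1 / ((INR m + 1) * binom (4 * S m) (2 * S m)).
Proof.
  unfold beta_nat, binom, Binomial.C.
  replace (4 * S m - 2 * S m)%nat with (S (S (2 * m))) by lia.
  replace (2 * S m)%nat with (S (S (2 * m))) by lia.
  replace (4 * S m)%nat with (S (S (2 * m) + S (2 * m) + 1)) by lia.
  replace (S (2 * m) + S (2 * m) + 1)%nat with (S (S (2 * m + 2 * m + 1))) by lia.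
  fact_field m.
Qed.

Lemma t_1mt_bound (t : R) : 0 <= t <= 1 -> 0 <= t * (1 - t) <= 1 / 4.
Proof. intro Ht. pose proof (pow2_ge_0 (t - 1 / 2)). split; nra. Qed.

Lemma t_1mt2_bound (t : R) : 0 <= t <= 1 -> 0 <= t * (1 - t) ^ 2 <= 4 / 27.
Proof.
  intro Ht. split.
  - apply Rmult_le_pos; [lra | apply pow2_ge_0].
  - (* 4 - 27 t (1 - t)^2 = (1 - 3 t)^2 (4 - 3 t) *)
    assert (0 <= (1 - 3 * t) ^ 2 * (4 - 3 * t)) by (apply Rmult_le_pos; [apply pow2_ge_0 | lra]).
    nra.
Qed.

Lemma inv_binom_central_le (m : nat) :
  / binom (4 * m) (2 * m) <= (4 * INR m + 1) * (/ 16) ^ m.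
Proof.
  pose proof (pos_INR m). pose proof (binom_pos (4 * m) (2 * m)).
  assert (Hbeta : Rabs (beta_nat (2 * m) (2 * m)) <= (1 - 0) * (/ 16) ^ m).
  { apply (norm_RInt_le_const (V := R_NormedModule) (fun t => t ^ (2 * m) * (1 - t) ^ (2 * m))
      0 1 _ _ ltac:(lra));
      [|apply is_RInt_beta_nat].
    intros t Ht. change (norm ?x) with (Rabs x). pose proof (t_1mt_bound t Ht).
    rewrite pow_mult, pow_mult, <- Rpow_mult_distr, Rabs_right
      by (apply Rle_ge, pow_le; nra).
    apply pow_incr. split; nra. }
  rewrite beta_nat_central, Rabs_right, Rminus_0_r, Rmult_1_l in Hbeta.
  - rewrite Rinv_mult in Hbeta.
    apply (Rmult_le_reg_l (/ (4 * INR m + 1))); [apply Rinv_0_lt_compat; lra|].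
    rewrite <- Rmult_assoc, Rinv_l, Rmult_1_l by lra. exact Hbeta.
  - apply Rle_ge, Rlt_le, Rinv_0_lt_compat, Rmult_lt_0_compat; lra.
Qed.

Lemma Rabs_affine_le (a0 a1 x : R) : 0 <= x <= 1 -> Rabs (a0 + a1 * x) <= Rabs a0 + Rabs a1.
Proof.
  intro Hx. eapply Rle_trans; [apply Rabs_triang|].
  rewrite Rabs_mult, (Rabs_right x) by lra.
  pose proof (Rabs_pos a1). nra.
Qed.

Lemma is_RInt_moment_3k (c a0 a1 : R) (m : nat) :
  is_RInt (fun t => (a0 + a1 * t) * (c * (t * (1 - t) ^ 2)) ^ m) 0 1
    (3 / 2 * (c ^ m * ((3 * a0 + a1) * INR (S m) - a0) /
      (INR (S m) * (2 * INR (S m) - 1) * binom (3 * S m) (S m)))).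
Proof.
  assert (H := is_RInt_plus _ _ _ _ _ _
    (is_RInt_scal _ _ _ (a0 * c ^ m) _ (is_RInt_beta_nat (2 * m) m))
    (is_RInt_scal _ _ _ (a1 * c ^ m) _ (is_RInt_beta_nat (2 * m) (S m)))).
  revert H. apply is_RInt_congr; unfold plus, scal, mult; cbn -[pow Nat.mul INR binom beta_nat].
  - intro t. rewrite pow_mult, !Rpow_mult_distr, <- (tech_pow_Rmult t m). ring.
  - rewrite beta_nat_m_2m, beta_nat_Sm_2m, S_INR.
    pose proof (pos_INR m). pose proof (binom_pos (3 * S m) (S m)). field. lra.
Qed.

Lemma is_RInt_moment_4k (c a0 a1 : R) (m : nat) :
  is_RInt (fun t => (a0 + a1 * (t * (1 - t))) * (c * (t * (1 - t)) ^ 2) ^ m) 0 1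
    (c ^ m * ((8 * a0 + 2 * a1) * INR (S m) - (2 * a0 + a1)) /
      (INR (S m) * (2 * INR (S m) - 1) * binom (4 * S m) (2 * S m))).
Proof.
  assert (H := is_RInt_plus _ _ _ _ _ _
    (is_RInt_scal _ _ _ (a0 * c ^ m) _ (is_RInt_beta_nat (2 * m) (2 * m)))
    (is_RInt_scal _ _ _ (a1 * c ^ m) _ (is_RInt_beta_nat (S (2 * m)) (S (2 * m))))).
  revert H. apply is_RInt_congr; unfold plus, scal, mult; cbn -[pow Nat.mul INR binom beta_nat].
  - intro t. rewrite <- (tech_pow_Rmult t (2 * m)), <- (tech_pow_Rmult (1 - t) (2 * m)).
    rewrite !pow_mult, !Rpow_mult_distr. ring.
  - rewrite beta_nat_central, beta_nat_S2m_S2m, binom_4k_succ, S_INR.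
    pose proof (pos_INR m). pose proof (binom_pos (4 * m) (2 * m)). field. lra.
Qed.

Lemma sum_binom_3k_k (c a0 a1 I : R) : Rabs c < 27 / 4 ->
  is_RInt (fun t => (a0 + a1 * t) / (1 - c * (t * (1 - t) ^ 2))) 0 1 I ->
  sum_from_1 (fun k => c ^ (k - 1) * ((3 * a0 + a1) * INR k - a0) /
    (INR k * (2 * INR k - 1) * binom (3 * k) k)) (2 / 3 * I).
Proof.
  intros Hc HI.
  assert (H : is_series (fun m => 3 / 2 * (c ^ m * ((3 * a0 + a1) * INR (S m) - a0) /
      (INR (S m) * (2 * INR (S m) - 1) * binom (3 * S m) (S m)))) I).
  { apply (is_series_RInt_geom (fun t => a0 + a1 * t) (fun t => c * (t * (1 - t) ^ 2))
      _ I (Rabs c * (4 / 27)) (Rabs a0 + Rabs a1)).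
    - lra.
    - intros t Ht. pose proof (t_1mt2_bound t Ht). rewrite Rabs_mult, (Rabs_right (_ * _)) by lra.
      apply Rmult_le_compat_l; [apply Rabs_pos | lra].
    - intros t Ht. apply Rabs_affine_le, Ht.
    - intro m. apply is_RInt_moment_3k.
    - exact HI. }
  apply (is_series_scal (2 / 3)) in H.
  unfold sum_from_1. eapply is_series_ext; [|exact H].
  intro m. unfold scal, mult; cbn -[pow Nat.mul Nat.sub INR binom].
  replace (S m - 1)%nat with m by lia. field.
  pose proof (pos_INR m). pose proof (binom_pos (3 * S m) (S m)). rewrite S_INR. repeat split; lra.
Qed.

Lemma sum_binom_4k_2k (c a0 a1 I : R) : Rabs c < 16 ->
  is_RInt (fun t => (a0 + a1 * (t * (1 - t))) / (1 - c * (t * (1 - t)) ^ 2)) 0 1 I ->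
  sum_from_1 (fun k => c ^ (k - 1) * ((8 * a0 + 2 * a1) * INR k - (2 * a0 + a1)) /
    (INR k * (2 * INR k - 1) * binom (4 * k) (2 * k))) I.
Proof.
  intros Hc HI. unfold sum_from_1.
  apply (is_series_RInt_geom (fun t => a0 + a1 * (t * (1 - t))) (fun t => c * (t * (1 - t)) ^ 2)
    _ I (Rabs c * (1 / 16)) (Rabs a0 + Rabs a1)).
  - lra.
  - intros t Ht. pose proof (t_1mt_bound t Ht).
    rewrite Rabs_mult, (Rabs_right (_ ^ 2)) by (apply Rle_ge, pow2_ge_0).
    apply Rmult_le_compat_l; [apply Rabs_pos | nra].
  - intros t Ht. pose proof (t_1mt_bound t Ht). apply Rabs_affine_le. lra.
  - intro m. replace (S m - 1)%nat with m by lia. apply is_RInt_moment_4k.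
  - exact HI.
Qed.

Lemma is_derive_atan_quadratic (a b c s t : R) : 0 < s -> s ^ 2 = 4 * a * c - b ^ 2 ->
  is_derive (fun x => 2 / s * atan ((2 * a * x + b) / s)) t (/ (a * t ^ 2 + b * t + c)).
Proof.
  intros Hs Hdisc.
  assert (Ha : a <> 0) by (intros ->; nra).
  (* with c eliminated, the derivative identity becomes rational in s *)
  replace c with ((s ^ 2 + b ^ 2) / (4 * a)) by (rewrite Hdisc; field; exact Ha).
  assert (0 < s ^ 2 + (2 * a * t + b) ^ 2) by (pose proof (pow2_ge_0 (2 * a * t + b)); nra).
  auto_derive.
  - auto.
  - field. split; [exact Ha | split; [apply Rgt_not_eq; nra | lra]].
Qed.

Lemma atan_sqrt3 : atan (sqrt 3) = PI / 3.
Proof. rewrite <- tan_PI3. apply atan_tan. pose proof PI_RGT_0. lra. Qed.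

Lemma atan_inv_sqrt3 : atan (1 / sqrt 3) = PI / 6.
Proof. rewrite <- tan_PI6. apply atan_tan. pose proof PI_RGT_0. lra. Qed.

Lemma three_div_sqrt3 : 3 / sqrt 3 = sqrt 3.
Proof.
  assert (H : 0 < sqrt 3) by (apply sqrt_lt_R0; lra).
  rewrite <- (sqrt_sqrt 3) at 1 by lra. field. lra.
Qed.

Lemma sum_3k_pi_6 : sum_from_1 (fun k => (5 * INR k - 2) /
    (INR k * (2 * INR k - 1) * 2 ^ k * binom (3 * k) k)) (PI / 6).
Proof.
  assert (HI : is_RInt (fun t => (1 + -1/2 * t) / (1 - /2 * (t * (1 - t) ^ 2))) 0 1 (PI / 4)).
  { apply is_RInt_antiderivative with (F := fun t => atan t); [lra | | |].
    - intros t Ht. pose proof (t_1mt2_bound t Ht). auto_derive; [auto|]. field. nra.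
    - intros t Ht. pose proof (t_1mt2_bound t Ht). auto_derive. lra.
    - rewrite atan_1, atan_0. ring. }
  assert (H := sum_binom_3k_k (/ 2) 1 (-1/2) _ ltac:(rewrite Rabs_right; lra) HI).
  replace (PI / 6) with (2 / 3 * (PI / 4)) by field.
  revert H. apply sum_from_1_ext. intro m.
  replace (S m - 1)%nat with m by lia.
  pose proof (pos_INR m). pose proof (binom_pos (3 * S m) (S m)).
  rewrite pow_inv, <- (tech_pow_Rmult 2 m), S_INR. field.
  repeat split; try lra. apply pow_nonzero. lra.
Qed.

Lemma sum_3k_sqrt3_pi : sum_from_1 (fun k => (7 * INR k - 3) * 8 ^ k /
    (INR k * (2 * INR k - 1) * 3 ^ k * binom (3 * k) k)) (8 * sqrt 3 / 9 * PI).
Proof.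
  assert (Hs : 0 < sqrt 3) by (apply sqrt_lt_R0; lra).
  assert (HI : is_RInt (fun t => (8 + -16/3 * t) / (1 - 8/3 * (t * (1 - t) ^ 2))) 0 1
                 (4 * PI / sqrt 3)).
  { apply is_RInt_antiderivative with
      (F := fun t => 8 * (2 / (2 * sqrt 3) * atan ((2 * 4 * t + -2) / (2 * sqrt 3)))); [lra | | |].
    - intros t Ht. pose proof (t_1mt2_bound t Ht).
      replace ((8 + -16/3 * t) / (1 - 8/3 * (t * (1 - t) ^ 2)))
        with (8 * / (4 * t ^ 2 + -2 * t + 1)) by (field; nra).
      apply is_derive_scal, is_derive_atan_quadratic; [lra|].
      replace ((2 * sqrt 3) ^ 2) with (4 * (sqrt 3 * sqrt 3)) by ring.
      rewrite sqrt_sqrt by lra. ring.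
    - intros t Ht. pose proof (t_1mt2_bound t Ht). auto_derive. lra.
    - replace ((2 * 4 * 1 + -2) / (2 * sqrt 3)) with (3 / sqrt 3) by (field; lra).
      replace ((2 * 4 * 0 + -2) / (2 * sqrt 3)) with (- (1 / sqrt 3)) by (field; lra).
      rewrite three_div_sqrt3, atan_opp, atan_sqrt3, atan_inv_sqrt3. field. lra. }
  assert (H := sum_binom_3k_k (8 / 3) 8 (-16/3) _ ltac:(rewrite Rabs_right; lra) HI).
  replace (8 * sqrt 3 / 9 * PI) with (2 / 3 * (4 * PI / sqrt 3))
    by (rewrite <- three_div_sqrt3 at 1; field; lra).
  revert H. apply sum_from_1_ext. intro m.
  replace (S m - 1)%nat with m by lia.
  pose proof (pos_INR m). pose proof (binom_pos (3 * S m) (S m)).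
  replace ((8 / 3) ^ m) with (8 ^ m / 3 ^ m)
    by (unfold Rdiv; rewrite Rpow_mult_distr, pow_inv; reflexivity).
  rewrite <- (tech_pow_Rmult 8 m), <- (tech_pow_Rmult 3 m), S_INR. field.
  repeat split; try lra. apply pow_nonzero. lra.
Qed.

Lemma sum_3k_ln2 : sum_from_1 (fun k => (28 * INR k - 11) /
    (INR k * (2 * INR k - 1) * (-4) ^ k * binom (3 * k) k)) (- 2 * ln 2).
Proof.
  assert (HI : is_RInt (fun t => (-11/4 + 5/4 * t) / (1 - / (-4) * (t * (1 - t) ^ 2))) 0 1
                 (- 3 * ln 2)).
  { apply is_RInt_antiderivative with
      (F := fun t => - 2 * ln (t + 1) + ln (t ^ 2 - 3 * t + 4)); [lra | | |].
    - intros t Ht. pose proof (t_1mt2_bound t Ht). auto_derive; [split; nra|]. field. split; nra.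
    - intros t Ht. pose proof (t_1mt2_bound t Ht). auto_derive. lra.
    - replace (1 ^ 2 - 3 * 1 + 4) with 2 by ring. replace (0 ^ 2 - 3 * 0 + 4) with (2 * 2) by ring.
      replace (1 + 1) with 2 by ring. replace (0 + 1) with 1 by ring.
      rewrite ln_mult, ln_1 by lra. ring. }
  assert (H := sum_binom_3k_k (/ (-4)) (-11/4) (5/4) _ ltac:(rewrite Rabs_left; lra) HI).
  replace (- 2 * ln 2) with (2 / 3 * (- 3 * ln 2)) by field.
  revert H. apply sum_from_1_ext. intro m.
  replace (S m - 1)%nat with m by lia.
  pose proof (pos_INR m). pose proof (binom_pos (3 * S m) (S m)).
  rewrite pow_inv, <- (tech_pow_Rmult (-4) m), S_INR. field.
  repeat split; try lra. apply pow_nonzero. lra.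
Qed.

Lemma sum_4k_ln3 : sum_from_1 (fun k => (7 * INR k - 2) /
    (INR k * (2 * INR k - 1) * (-3) ^ k * binom (4 * k) (2 * k))) (- (ln 3 / 4)).
Proof.
  assert (HI : is_RInt (fun t => (-1/4 + -1/6 * (t * (1 - t))) / (1 - / (-3) * (t * (1 - t)) ^ 2))
                 0 1 (- (ln 3 / 4))).
  { apply is_RInt_antiderivative with
      (F := fun t => (ln (t ^ 2 - 3 * t + 3) - ln (t ^ 2 + t + 1)) / 8); [lra | | |].
    - intros t Ht. pose proof (t_1mt_bound t Ht). auto_derive; [split; nra|]. field. split; nra.
    - intros t Ht. pose proof (t_1mt_bound t Ht). auto_derive. nra.
    - replace (1 ^ 2 - 3 * 1 + 3) with 1 by ring. replace (1 ^ 2 + 1 + 1) with 3 by ring.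
      replace (0 ^ 2 - 3 * 0 + 3) with 3 by ring. replace (0 ^ 2 + 0 + 1) with 1 by ring.
      rewrite ln_1. field. }
  assert (H := sum_binom_4k_2k (/ (-3)) (-1/4) (-1/6) _ ltac:(rewrite Rabs_left; lra) HI).
  revert H. apply sum_from_1_ext. intro m.
  replace (S m - 1)%nat with m by lia.
  pose proof (pos_INR m). pose proof (binom_pos (4 * S m) (2 * S m)).
  rewrite pow_inv, <- (tech_pow_Rmult (-3) m), S_INR. field.
  repeat split; try lra. apply pow_nonzero. lra.
Qed.

Lemma sum_4k_sqrt3_pi : sum_from_1 (fun k => (10 * INR k - 3) /
    (INR k * (2 * INR k - 1) * binom (4 * k) (2 * k))) (2 * sqrt 3 / 9 * PI).
Proof.
  assert (Hs : 0 < sqrt 3) by (apply sqrt_lt_R0; lra).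
  assert (HI : is_RInt (fun t => (1 + 1 * (t * (1 - t))) / (1 - 1 * (t * (1 - t)) ^ 2)) 0 1
                 (2 * PI / (3 * sqrt 3))).
  { apply is_RInt_antiderivative with
      (F := fun t => 2 / sqrt 3 * atan ((2 * 1 * t + -1) / sqrt 3)); [lra | | |].
    - intros t Ht. pose proof (t_1mt_bound t Ht).
      replace ((1 + 1 * (t * (1 - t))) / (1 - 1 * (t * (1 - t)) ^ 2))
        with (/ (1 * t ^ 2 + -1 * t + 1)) by (field; nra).
      apply is_derive_atan_quadratic; [lra|].
      replace (sqrt 3 ^ 2) with (sqrt 3 * sqrt 3) by ring.
      rewrite sqrt_sqrt by lra. ring.
    - intros t Ht. pose proof (t_1mt_bound t Ht). auto_derive. nra.
    - replace ((2 * 1 * 1 + -1) / sqrt 3) with (1 / sqrt 3) by (field; lra).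
      replace ((2 * 1 * 0 + -1) / sqrt 3) with (- (1 / sqrt 3)) by (field; lra).
      rewrite atan_opp, atan_inv_sqrt3. field. lra. }
  assert (H := sum_binom_4k_2k 1 1 1 _ ltac:(rewrite Rabs_right; lra) HI).
  replace (2 * sqrt 3 / 9 * PI) with (2 * PI / (3 * sqrt 3))
    by (rewrite <- three_div_sqrt3 at 1; field; lra).
  revert H. apply sum_from_1_ext. intro m.
  pose proof (pos_INR m). pose proof (binom_pos (4 * S m) (2 * S m)).
  rewrite pow1, S_INR. field. repeat split; lra.
Qed.

Lemma sum_4k_pi_2 : sum_from_1 (fun k => (3 * INR k - 1) * 4 ^ k /
    (INR k * (2 * INR k - 1) * binom (4 * k) (2 * k))) (PI / 2).
Proof.
  assert (HI : is_RInt (fun t => (1 + 2 * (t * (1 - t))) / (1 - 4 * (t * (1 - t)) ^ 2)) 0 1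
                 (PI / 2)).
  { apply is_RInt_antiderivative with (F := fun t => atan (2 * t - 1)); [lra | | |].
    - intros t Ht. pose proof (t_1mt_bound t Ht). auto_derive; [auto|]. field. nra.
    - intros t Ht. pose proof (t_1mt_bound t Ht). auto_derive. nra.
    - replace (2 * 1 - 1) with 1 by ring. replace (2 * 0 - 1) with (Ropp 1) by ring.
      rewrite atan_opp, atan_1. field. }
  assert (H := sum_binom_4k_2k 4 1 2 _ ltac:(rewrite Rabs_right; lra) HI).
  revert H. apply sum_from_1_ext. intro m.
  replace (S m - 1)%nat with m by lia.
  pose proof (pos_INR m). pose proof (binom_pos (4 * S m) (2 * S m)).
  rewrite <- (tech_pow_Rmult 4 m), S_INR. field. repeat split; lra.
Qed.

Lemma sum_4k_pi_4 : sum_from_1 (fun k => (6 * INR k - 1) * (-2) ^ (k - 1) /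
    (INR k * (2 * INR k - 1) * binom (4 * k) (2 * k))) (PI / 4).
Proof.
  assert (HI : is_RInt (fun t => (1 + -1 * (t * (1 - t))) / (1 - -2 * (t * (1 - t)) ^ 2)) 0 1
                 (PI / 4)).
  { apply is_RInt_antiderivative with
      (F := fun t => / 2 * atan ((2 * t - 1) / (1 + 2 * t - 2 * t ^ 2))); [lra | | |].
    - intros t Ht. pose proof (t_1mt_bound t Ht).
      auto_derive; [nra|]. field. repeat split; [pose proof (pow2_ge_0 (t - t ^ 2)) | |]; nra.
    - intros t Ht. pose proof (t_1mt_bound t Ht). auto_derive. nra.
    - replace ((2 * 1 - 1) / (1 + 2 * 1 - 2 * 1 ^ 2)) with 1 by field.
      replace ((2 * 0 - 1) / (1 + 2 * 0 - 2 * 0 ^ 2)) with (Ropp 1) by field.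
      rewrite atan_opp, atan_1. field. }
  assert (H := sum_binom_4k_2k (-2) 1 (-1) _ ltac:(rewrite Rabs_left; lra) HI).
  revert H. apply sum_from_1_ext. intro m.
  pose proof (pos_INR m). pose proof (binom_pos (4 * S m) (2 * S m)).
  rewrite S_INR. field. repeat split; lra.
Qed.

Lemma sum_4k_ln2 : sum_from_1 (fun k => (14 * INR k - 3) /
    (INR k * (2 * INR k - 1) * 4 ^ k * binom (4 * k) (2 * k))) (2 / 3 * ln 2).
Proof.
  assert (HI : is_RInt (fun t => (1/2 + -1/4 * (t * (1 - t))) / (1 - / 4 * (t * (1 - t)) ^ 2))
                 0 1 (2 / 3 * ln 2)).
  { apply is_RInt_antiderivative with
      (F := fun t => (ln (1 + t) - ln (2 - t)) / 3); [lra | | |].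
    - intros t Ht. pose proof (t_1mt_bound t Ht). auto_derive; [lra|]. field. nra.
    - intros t Ht. pose proof (t_1mt_bound t Ht). auto_derive. nra.
    - replace (1 + 1) with 2 by ring. replace (2 - 1) with 1 by ring.
      replace (1 + 0) with 1 by ring. replace (2 - 0) with 2 by ring.
      rewrite ln_1. field. }
  assert (H := sum_binom_4k_2k (/ 4) (1/2) (-1/4) _ ltac:(rewrite Rabs_right; lra) HI).
  revert H. apply sum_from_1_ext. intro m.
  replace (S m - 1)%nat with m by lia.
  pose proof (pos_INR m). pose proof (binom_pos (4 * S m) (2 * S m)).
  rewrite pow_inv, <- (tech_pow_Rmult 4 m), S_INR. field.
  repeat split; try lra. apply pow_nonzero. lra.
Qed.

Lemma cube_le_pow2 (n : nat) : (n ^ 3 <= 8 * 2 ^ n)%nat.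
Proof.
  induction n as [|n IH]; [simpl; lia|].
  destruct (Nat.le_gt_cases n 3) as [Hn|Hn].
  - destruct n as [|[|[|[|n]]]]; simpl; lia.
  - assert (4 * (n * n) <= n * (n * n))%nat by nia.
    rewrite Nat.pow_succ_r'. simpl in *. nia.
Qed.

Lemma succ_cube_le_pow2 (m : nat) : (INR m + 1) ^ 3 <= 16 * 2 ^ m.
Proof.
  assert (H := le_INR _ _ (cube_le_pow2 (S m))).
  rewrite mult_INR, !pow_INR, S_INR in H.
  replace (INR 8) with 8 in H by (simpl; ring). replace (INR 2) with 2 in H by (simpl; ring).
  rewrite <- (tech_pow_Rmult 2 m) in H. lra.
Qed.

Lemma Rabs_quadratic_le (p0 p1 p2 x : R) : 0 <= x ->
  Rabs (p0 + p1 * x + p2 * x ^ 2) <= (Rabs p0 + Rabs p1 + Rabs p2) * (x + 1) ^ 2.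
Proof.
  intro Hx.
  eapply Rle_trans; [apply Rabs_triang|].
  eapply Rle_trans; [apply Rplus_le_compat_r, Rabs_triang|].
  rewrite !Rabs_mult, (Rabs_right x), (Rabs_right (x ^ 2)) by (try apply Rle_ge, pow2_ge_0; lra).
  pose proof (Rabs_pos p0). pose proof (Rabs_pos p1). pose proof (Rabs_pos p2).
  nra.
Qed.

Lemma is_lim_seq_quadratic_central_binom (p0 p1 p2 s : R) : Rabs s <= 4 ->
  is_lim_seq (fun m => (p0 + p1 * INR m + p2 * INR m ^ 2) * s ^ m / binom (4 * m) (2 * m)) 0.
Proof.
  intro Hs.
  set (A := Rabs p0 + Rabs p1 + Rabs p2).
  apply is_lim_seq_geom_bound with (K := 64 * A) (q := / 2); [rewrite Rabs_right; lra|].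
  intro m. rewrite Rminus_0_r.
  pose proof (pos_INR m) as Hm.
  assert (HA : 0 <= A) by (unfold A; pose proof (Rabs_pos p0); pose proof (Rabs_pos p1);
                          pose proof (Rabs_pos p2); lra).
  assert (HP : Rabs (p0 + p1 * INR m + p2 * INR m ^ 2) <= A * (INR m + 1) ^ 2)
    by (apply Rabs_quadratic_le, Hm).
  assert (Hpow : Rabs s ^ m <= 4 ^ m) by (apply pow_incr; split; [apply Rabs_pos | lra]).
  assert (Hb := inv_binom_central_le m).
  assert (Hb0 : 0 < / binom (4 * m) (2 * m)) by (apply Rinv_0_lt_compat, binom_pos).
  assert (Hcube := succ_cube_le_pow2 m).
  assert (Hgeom : 4 ^ m * (/ 16) ^ m * 2 ^ m = (/ 2) ^ m).
  { rewrite <- !Rpow_mult_distr. f_equal. field. }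
  set (u := 4 ^ m * (/ 16) ^ m).
  assert (Hu : 0 < u) by (unfold u; apply Rmult_lt_0_compat; apply pow_lt; lra).
  unfold Rdiv. rewrite !Rabs_mult, <- RPow_abs, (Rabs_right (/ _)) by lra.
  apply Rle_trans with (A * (INR m + 1) ^ 2 * 4 ^ m * ((4 * INR m + 1) * (/ 16) ^ m)).
  { apply Rmult_le_compat; [apply Rmult_le_pos; [apply Rabs_pos | apply pow_le, Rabs_pos] | lra | |lra].
    apply Rmult_le_compat; [apply Rabs_pos | apply pow_le, Rabs_pos | lra | lra]. }
  assert (HAu : 0 <= A * (INR m + 1) ^ 2 * u)
    by (apply Rmult_le_pos; [apply Rmult_le_pos; [lra | apply pow2_ge_0] | lra]).
  apply Rle_trans with (A * (INR m + 1) ^ 2 * u * (4 * (INR m + 1))).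
  { replace (A * (INR m + 1) ^ 2 * 4 ^ m * ((4 * INR m + 1) * (/ 16) ^ m))
      with (A * (INR m + 1) ^ 2 * u * (4 * INR m + 1)) by (unfold u; ring).
    apply Rmult_le_compat_l; lra. }
  rewrite <- Hgeom. fold u.
  replace (A * (INR m + 1) ^ 2 * u * (4 * (INR m + 1))) with (4 * A * u * (INR m + 1) ^ 3) by ring.
  replace (64 * A * (u * 2 ^ m)) with (4 * A * u * (16 * 2 ^ m)) by ring.
  apply Rmult_le_compat_l; [apply Rmult_le_pos; lra | exact Hcube].
Qed.

Lemma sum_4k_quadratic_pi : sum_from_1 (fun k => (12 * INR k ^ 2 + 1) * 4 ^ k /
    binom (4 * k) (2 * k)) (11 / 2 * PI + 50 / 3).
Proof.
  set (H := fun m => (-50/3 + -40/3 * INR m + -4 * INR m ^ 2) * 4 ^ m / binom (4 * m) (2 * m)).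
  replace (11 / 2 * PI + 50 / 3) with (11 * (PI / 2) - H 0%nat)
    by (unfold H, binom; simpl (4 * 0)%nat; simpl (2 * 0)%nat; rewrite C_n_n, INR_0; field).
  apply (sum_from_1_telescoping _ _ H 11 _ sum_4k_pi_2).
  - intro m. unfold H. cbv beta. rewrite binom_4k_succ, S_INR.
    pose proof (pos_INR m). pose proof (binom_pos (4 * m) (2 * m)).
    rewrite <- (tech_pow_Rmult 4 m). field. repeat split; lra.
  - apply is_lim_seq_quadratic_central_binom. rewrite Rabs_right; lra.
Qed.

Lemma sum_4k_quadratic_neg2 : sum_from_1 (fun k => INR k * (126 * INR k + 29) * (-2) ^ k /
    binom (4 * k) (2 * k)) (- 2 * PI - 65 / 3).
Proof.
  set (H := fun m => (65/3 + 103/3 * INR m + 14 * INR m ^ 2) * (-2) ^ m / binom (4 * m) (2 * m)).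
  replace (- 2 * PI - 65 / 3) with (-8 * (PI / 4) - H 0%nat)
    by (unfold H, binom; simpl (4 * 0)%nat; simpl (2 * 0)%nat; rewrite C_n_n, INR_0; field).
  apply (sum_from_1_telescoping _ _ H (-8) _ sum_4k_pi_4).
  - intro m. unfold H. cbv beta. rewrite binom_4k_succ, S_INR.
    replace (S m - 1)%nat with m by lia.
    pose proof (pos_INR m). pose proof (binom_pos (4 * m) (2 * m)).
    rewrite <- (tech_pow_Rmult (-2) m). field. repeat split; lra.
  - apply is_lim_seq_quadratic_central_binom. rewrite Rabs_left; lra.
Qed.

Lemma sum_4k_quadratic_ln2 : sum_from_1 (fun k => INR k * (70 * INR k - 37) /
    (4 ^ k * binom (4 * k) (2 * k))) (8 / 729 * (46 * ln 2 + 111)).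
Proof.
  set (H := fun m => (-296/243 + -181/81 * INR m + -10/9 * INR m ^ 2) * (/ 4) ^ m /
                     binom (4 * m) (2 * m)).
  replace (8 / 729 * (46 * ln 2 + 111)) with (184 / 243 * (2 / 3 * ln 2) - H 0%nat)
    by (unfold H, binom; simpl (4 * 0)%nat; simpl (2 * 0)%nat; rewrite C_n_n, INR_0; field).
  apply (sum_from_1_telescoping _ _ H (184 / 243) _ sum_4k_ln2).
  - intro m. unfold H. cbv beta. rewrite binom_4k_succ, S_INR, !pow_inv.
    pose proof (pos_INR m). pose proof (binom_pos (4 * m) (2 * m)).
    rewrite <- (tech_pow_Rmult 4 m). field. repeat split; try lra. apply pow_nonzero. lra.
  - apply is_lim_seq_quadratic_central_binom. rewrite Rabs_right; lra.
Qed.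

Theorem theorem1p4 :
  sum_from_1 (fun k => (5 * INR k - 2) /
      (INR k * (2 * INR k - 1) * 2 ^ k * binom (3 * k) k)) (PI / 6) /\
  sum_from_1 (fun k => (7 * INR k - 3) * 8 ^ k /
      (INR k * (2 * INR k - 1) * 3 ^ k * binom (3 * k) k)) (8 * sqrt 3 / 9 * PI) /\
  sum_from_1 (fun k => (28 * INR k - 11) /
      (INR k * (2 * INR k - 1) * (-4) ^ k * binom (3 * k) k)) (- 2 * ln 2) /\
  sum_from_1 (fun k => (7 * INR k - 2) /
      (INR k * (2 * INR k - 1) * (-3) ^ k * binom (4 * k) (2 * k))) (- (ln 3 / 4)) /\
  sum_from_1 (fun k => (10 * INR k - 3) /
      (INR k * (2 * INR k - 1) * binom (4 * k) (2 * k))) (2 * sqrt 3 / 9 * PI) /\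
  sum_from_1 (fun k => (3 * INR k - 1) * 4 ^ k /
      (INR k * (2 * INR k - 1) * binom (4 * k) (2 * k))) (PI / 2) /\
  sum_from_1 (fun k => (6 * INR k - 1) * (-2) ^ (k - 1) /
      (INR k * (2 * INR k - 1) * binom (4 * k) (2 * k))) (PI / 4) /\
  sum_from_1 (fun k => (14 * INR k - 3) /
      (INR k * (2 * INR k - 1) * 4 ^ k * binom (4 * k) (2 * k))) (2 / 3 * ln 2) /\
  sum_from_1 (fun k => (12 * INR k ^ 2 + 1) * 4 ^ k /
      binom (4 * k) (2 * k)) (11 / 2 * PI + 50 / 3) /\
  sum_from_1 (fun k => INR k * (126 * INR k + 29) * (-2) ^ k /
      binom (4 * k) (2 * k)) (- 2 * PI - 65 / 3) /\
  sum_from_1 (fun k => INR k * (70 * INR k - 37) /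
      (4 ^ k * binom (4 * k) (2 * k))) (8 / 729 * (46 * ln 2 + 111)).
Proof.
  repeat split;
    [ exact sum_3k_pi_6 | exact sum_3k_sqrt3_pi | exact sum_3k_ln2
    | exact sum_4k_ln3 | exact sum_4k_sqrt3_pi | exact sum_4k_pi_2 | exact sum_4k_pi_4
    | exact sum_4k_ln2 | exact sum_4k_quadratic_pi | exact sum_4k_quadratic_neg2
    | exact sum_4k_quadratic_ln2 ].
Qed.
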